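(* Let $\mathcal C$ be a full trio. If the simultaneous unboundedness problem is decidable for $\mathcal C$, then the diagonal problem is decidable for $\mathcal C$.
   Context: A full trio is a nonempty class of (effectively represented) languages effectively closed under $B$-projection (keeping only symbols of $B$), $B$-upward closure (inserting arbitrary symbols of $B$), for every finite alphabet $B$, and under intersection with regular languages. For $A=\{a_1,\dots,a_n\}$ the Parikh image of $w$ is $(\#_{a_1}(w),\dots,\#_{a_n}(w))$. The diagonal problem: given $L\subseteq A^*$ in $\mathcal C$, decide whether every tuple $(m,\dots,m)\in\mathbb N^n$ is componentwise dominated by the Parikh image of some word of $L$. The SUP is this problem restricted to inputs $L\subseteq b_1^*\cdots b_n^*$ where $b_1,\dots,b_n$ is some enumeration of $A$. *)

From mathcomp Require Import all_boot.
Set Implicit Arguments. Unset Strict Implicit. Unset Printing Implicit Defensive.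

(* Computability: total recursive functions on nat (Kleene), made     *)
(* unary via the Cantor pairing function.                             *)

Definition cpair (x y : nat) : nat := (x + y) * (x + y).+1 %/ 2 + y.

Fixpoint cunpair (n : nat) : nat * nat :=
  match n with
  | 0 => (0, 0)
  | n'.+1 => let: (x, y) := cunpair n' in
             match x with
             | 0 => (y.+1, 0)
             | x'.+1 => (x', y.+1)
             end
  end.

Definition cfst (n : nat) : nat := (cunpair n).1.
Definition csnd (n : nat) : nat := (cunpair n).2.

Inductive computable : (nat -> nat) -> Prop :=
| c_zero : computable (fun _ => 0)
| c_succ : computable S
| c_fst : computable cfst
| c_snd : computable csnd
| c_pair f g : computable f -> computable g ->
    computable (fun x => cpair (f x) (g x))
| c_comp f g : computable f -> computable g -> computable (fun x => f (g x))
| c_rec f g h : computable f -> computable g ->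
    (forall a, h (cpair a 0) = f a) ->
    (forall a n, h (cpair a n.+1) = g (cpair a (cpair n (h (cpair a n))))) ->
    computable h
| c_min f g : computable f ->
    (forall x, f (cpair x (g x)) = 0 /\ forall m, m < g x -> f (cpair x m) <> 0) ->
    computable g.

Fixpoint code_seq (s : seq nat) : nat :=
  match s with
  | [::] => 0
  | x :: s' => (cpair x (code_seq s')).+1
  end.

Definition lang := seq nat -> Prop.

Inductive regex : Type :=
| RNone
| REps
| RChr of nat
| RCat of regex & regex
| RAlt of regex & regex
| RStar of regex.

Inductive rmatch : regex -> seq nat -> Prop :=
| m_eps : rmatch REps [::]
| m_chr a : rmatch (RChr a) [:: a]
| m_cat r s u v : rmatch r u -> rmatch s v -> rmatch (RCat r s) (u ++ v)
| m_altl r s u : rmatch r u -> rmatch (RAlt r s) u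
| m_altr r s u : rmatch s u -> rmatch (RAlt r s) u
| m_star0 r : rmatch (RStar r) [::]
| m_starS r u v : rmatch r u -> rmatch (RStar r) v -> rmatch (RStar r) (u ++ v).

Fixpoint code_regex (r : regex) : nat :=
  match r with
  | RNone => cpair 0 0
  | REps => cpair 1 0
  | RChr a => cpair 2 a
  | RCat r s => cpair 3 (cpair (code_regex r) (code_regex s))
  | RAlt r s => cpair 4 (cpair (code_regex r) (code_regex s))
  | RStar r => cpair 5 (code_regex r)
  end.

Inductive ins (B : seq nat) : seq nat -> seq nat -> Prop :=
| ins_nil : ins B [::] [::]
| ins_keep x w u : ins B w u -> ins B (x :: w) (x :: u)
| ins_add b w u : b \in B -> ins B w u -> ins B w (b :: u).

Fixpoint in_blocks (bs : seq nat) (w : seq nat) : Prop :=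
  match bs with
  | [::] => w = [::]
  | b :: bs' => exists k w', w = nseq k b ++ w' /\ in_blocks bs' w'
  end.

(* Effectively represented classes: a code d : nat denotes sem d.     *)

Definition full_trio (sem : nat -> lang) : Prop :=
  (forall d, exists A : seq nat, forall w, sem d w -> all (fun a => a \in A) w) /\
  (exists f, computable f /\ forall (B : seq nat) d w,
      sem (f (cpair (code_seq B) d)) w <->
      exists u, sem d u /\ w = filter (fun a => a \in B) u) /\
  (exists f, computable f /\ forall (B : seq nat) d w,
      sem (f (cpair (code_seq B) d)) w <-> exists u, sem d u /\ ins B u w) /\
  (exists f, computable f /\ forall (r : regex) d w,
      sem (f (cpair d (code_regex r))) w <-> sem d w /\ rmatch r w).

Definition diag_unbounded (A : seq nat) (L : lang) : Prop :=
  forall m, exists w, L w /\ forall a, a \in A -> m <= count_mem a w.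

Definition diagonal_decidable (sem : nat -> lang) : Prop :=
  exists f, computable f /\
    forall (A : seq nat) d, uniq A ->
      (forall w, sem d w -> all (fun a => a \in A) w) ->
      (f (cpair (code_seq A) d) = 1 <-> diag_unbounded A (sem d)).

(* SUP: the diagonal problem restricted to L ⊆ b_1^* ... b_n^*, where
   bs = [:: b_1; ...; b_n] enumerates A *)
Definition SUP_decidable (sem : nat -> lang) : Prop :=
  exists f, computable f /\
    forall (bs : seq nat) d, uniq bs ->
      (forall w, sem d w -> in_blocks bs w) ->
      (f (cpair (code_seq bs) d) = 1 <-> diag_unbounded bs (sem d)).

From mathcomp Require Import all_boot.
From Stdlib Require Import FunctionalExtensionality Lia.
From mathcomp Require Import zify.
Set Implicit Arguments. Unset Strict Implicit. Unset Printing Implicit Defensive.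

(* Let L be a language over A = {a_1, ..., a_n} and let b_1, ..., b_n be fresh
   letters. Insert markers b_i into the words of L, keep the results lying in
   the regular language of all (A + s_1 b_1)^* ... (A + s_n b_n)^* A^* where
   s ranges over the orderings of A, and project onto the markers: this yields
   L' included in b_1^* ... b_n^*, and it is built from L by trio operations
   that are computable from A. Each b_i only marks occurrences of s_i, so L' is
   diagonally unbounded only if L is. Conversely, a word of L with every letter
   at least n m times splits greedily into n consecutive pieces, the i-th one
   containing some new letter s_i at least m times; marking all occurrences of
   s_i in the i-th piece by b_i produces a word of L' with every marker at
   least m times. Hence deciding SUP for L' decides the diagonal problem for L. *)

Lemma ins_refl B w : ins B w w.
Proof. by elim: w => [|x w IH]; constructor. Qed.

Lemma ins_cat B w1 u1 w2 u2 : ins B w1 u1 -> ins B w2 u2 -> ins B (w1 ++ w2) (u1 ++ u2).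
Proof. by move=> H1 H2; elim: H1 => //= *; [exact: ins_keep | exact: ins_add]. Qed.

Lemma ins_count B w u a : ins B w u -> a \notin B -> count_mem a u = count_mem a w.
Proof.
move=> H Ha; elim: H => //= [x w' u' _ -> //|b w' u' Hb _ ->].
by case: eqP Hb Ha => // ->->.
Qed.

Lemma count_mem_notin (A : seq nat) b w :
  all (fun x => x \in A) w -> b \notin A -> count_mem b w = 0.
Proof. by move=> /allP Hw Hb; apply/count_memPn; apply: contra Hb => /Hw. Qed.

Lemma filter_mem_nseq (A S : seq nat) b w :
  all (fun x => (x \in A) || (x == b)) w -> b \in S -> (forall x, x \in A -> x \notin S) ->
  filter (fun x => x \in S) w = nseq (count_mem b w) b.
Proof.
move=> Hw Hb HAS; elim: w Hw => //= x w IH /andP[/orP[Hx|/eqP->] /IH ->].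
  by rewrite (negbTE (HAS x Hx)); case: eqP Hx => // ->; move/HAS; rewrite Hb.
by rewrite Hb eqxx.
Qed.

Lemma all_flatten T (p : pred T) ss : all p (flatten ss) = all (all p) ss.
Proof. by elim: ss => //= s ss IH; rewrite all_cat IH. Qed.

Lemma count_filter_mem (T : eqType) (S : seq T) b u :
  b \in S -> count_mem b (filter (fun x => x \in S) u) = count_mem b u.
Proof. by move=> bS; rewrite count_filter; apply: eq_count => x /=; case: eqP => // ->. Qed.

(** * Regular expressions *)

Lemma rmatch_cat r s u :
  rmatch (RCat r s) u <-> exists u1 u2, [/\ u = u1 ++ u2, rmatch r u1 & rmatch s u2].
Proof.
split=> [H|[u1 [u2 [-> H1 H2]]]]; last exact: m_cat.
by inversion H; subst; exists u0, v.
Qed.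

Lemma rmatch_alt r s u : rmatch (RAlt r s) u <-> rmatch r u \/ rmatch s u.
Proof.
split=> [H|[H|H]]; [by inversion H; subst; auto | exact: m_altl | exact: m_altr].
Qed.

Lemma rmatch_chr a u : rmatch (RChr a) u <-> u = [:: a].
Proof. by split=> [H|->]; [inversion H | constructor]. Qed.

Lemma rmatch_eps u : rmatch REps u <-> u = [::].
Proof. by split=> [H|->]; [inversion H | constructor]. Qed.

Lemma rmatch_none u : ~ rmatch RNone u.
Proof. by move=> H; inversion H. Qed.

Lemma rmatch_star_ind r (P : seq nat -> Prop) :
  P [::] -> (forall u v, rmatch r u -> P v -> P (u ++ v)) ->
  forall w, rmatch (RStar r) w -> P w.
Proof.
move=> P0 PS w H; remember (RStar r) as rs eqn:E.
induction H; try discriminate; first by [].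
by case: E => E; subst; apply: PS (IHrmatch2 _).
Qed.

Lemma rmatch_foldl_alt (T : eqType) (g : T -> regex) r s u :
  rmatch (foldl (fun r x => RAlt r (g x)) r s) u <->
  rmatch r u \/ exists2 x, x \in s & rmatch (g x) u.
Proof.
elim: s r => [|x s IH] r /=; first by split; [left | case=> // [[]]].
rewrite IH rmatch_alt; split.
- case=> [[H|H]|[y Hy H]]; first by left.
    by right; exists x; rewrite ?mem_head.
  by right; exists y; rewrite // inE Hy orbT.
- case=> [H|[y]]; first by left; left.
  by rewrite inE => /orP[/eqP->|Hy] H; [left; right | right; exists y].
Qed.

Definition re_alphabet (A : seq nat) := foldl (fun r a => RAlt r (RChr a)) RNone A.

Lemma rmatch_alphabet A u : rmatch (re_alphabet A) u <-> exists2 a, a \in A & u = [:: a].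
Proof.
rewrite rmatch_foldl_alt; split=> [[/rmatch_none[]|[a Ha /rmatch_chr]]|[a Ha ->]].
  by exists a.
by right; exists a => //; apply/rmatch_chr.
Qed.

Lemma rmatch_alphabet_star A w :
  rmatch (RStar (re_alphabet A)) w <-> all (fun x => x \in A) w.
Proof.
split; first apply: (@rmatch_star_ind _ (all (fun x => x \in A))) => //.
  by move=> u v /rmatch_alphabet [a Ha ->] Hv /=; rewrite Ha Hv.
elim: w => [|x w IH] /=; first by move=> _; constructor.
case/andP=> Hx /IH Hw; apply: (@m_starS _ [:: x] w) => //.
by apply/rmatch_alphabet; exists x.
Qed.

Definition re_segment r a b := RStar (RAlt r (RCat (RChr a) (RChr b))).

(* (r + c_0 b_0)^* ... (r + c_k b_k)^* with the markers b_i = M + i *)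
Definition re_segments r M c :=
  (foldl (fun p a => (p.1.+1, RCat p.2 (re_segment r a (M + p.1)))) (0, REps) c).2.

Fixpoint segments_split r M j (c u : seq nat) : Prop :=
  if c is a :: c' then
    exists v w, [/\ u = v ++ w, rmatch (re_segment r a (M + j)) v & segments_split r M j.+1 c' w]
  else u = [::].

Lemma rmatch_segments r M c u : rmatch (re_segments r M c) u <-> segments_split r M 0 c u.
Proof.
rewrite /re_segments.
suff -> : forall j r0 u, rmatch (foldl (fun p a => (p.1.+1, RCat p.2 (re_segment r a (M + p.1))))
    (j, r0) c).2 u <-> exists u0 u1, [/\ u = u0 ++ u1, rmatch r0 u0 & segments_split r M j c u1].
  split=> [[u0 [u1 [-> /rmatch_eps -> //]]]|H].
  by exists [::], u; split=> //; constructor.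
elim: c => [|a c IH] j r0 u0 /=.
  split=> [H|[v [w [-> H ->]]]]; last by rewrite cats0.
  by exists u0, [::]; rewrite cats0.
rewrite IH; split.
  case=> [x [y [-> /rmatch_cat [x1 [x2 [-> H1 H2]]] H3]]].
  by exists x1, (x2 ++ y); split; rewrite ?catA //; exists x2, y.
case=> [x [y [-> H1 [v [w [-> H2 H3]]]]]].
by exists (x ++ v), w; split; rewrite ?catA //; apply/rmatch_cat; exists x, v.
Qed.

Definition re_segments_union r M cs := foldl (fun acc c => RAlt acc (re_segments r M c)) RNone cs.

Lemma rmatch_segments_union r M cs u :
  rmatch (re_segments_union r M cs) u <-> exists2 c, c \in cs & segments_split r M 0 c u.
Proof.
rewrite rmatch_foldl_alt.
split=> [[/rmatch_none[]|[c Hc /rmatch_segments]]|[c Hc /rmatch_segments]]; first by exists c.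
by right; exists c.
Qed.

(** * Greedy splitting *)

Section GreedySplit.

Variable T : eqType.

Lemma split_at_threshold (S w : seq T) m : has (fun a => m <= count_mem a w) S ->
  exists p s, [/\ w = p ++ s, has (fun a => m <= count_mem a p) S
                & all (fun a => count_mem a p <= m) S].
Proof.
elim/last_ind: w => [|w x IH].
  by move=> HS; exists [::], [::]; split=> //; apply/allP.
case: (boolP (has (fun a => m <= count_mem a w) S)) => [/IH [p [s [-> Hp HpS]]] _|].
  by exists p, (rcons s x); rewrite rcons_cat.
rewrite -all_predC => /allP Hw HS; exists (rcons w x), [::]; rewrite cats0; split=> //.
apply/allP => a /Hw /=; rewrite -ltnNge -cats1 count_cat /= addn0.
by case: (x == a); rewrite /= ?addn1 ?addn0 => // /ltnW.
Qed.

Lemma greedy_pieces m k (S w : seq T) : size S = k -> uniq S ->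
  (forall a, a \in S -> k * m <= count_mem a w) ->
  exists c us rest, [/\ size c = k, c =i S, w = flatten us ++ rest
                      & all2 (fun a u => m <= count_mem a u) c us].
Proof.
elim: k S w => [|k IH] S w HS uS HSw.
  by exists [::], [::], w; rewrite (size0nil HS).
have /split_at_threshold [p [s [Ew /hasP[a aS Hpa] /allP HpS]]] :
    has (fun a => m <= count_mem a w) S.
  case: S HS uS HSw => // a S _ _ /(_ a (mem_head _ _)) Ha.
  by apply/hasP; exists a; rewrite ?mem_head // (leq_trans _ Ha) // mulSn leq_addr.
have [|||c [us [rest [Hc cS Es Hcus]]]] := IH (rem a S) s.
- by rewrite size_rem // HS.
- exact: rem_uniq.
- move=> a' /mem_rem a'S; move: (HSw a' a'S) (HpS a' a'S).
  by rewrite Ew count_cat mulSn; lia.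
exists (a :: c), (p :: us), rest; split => /=; rewrite ?Hc ?Hpa //.
- move=> x; rewrite inE cS (mem_rem_uniq _ uS) inE /=.
  by case: eqVneq => [->|].
- by rewrite Ew Es catA.
Qed.

End GreedySplit.

Fixpoint mark_after (a b : nat) (w : seq nat) : seq nat :=
  if w is x :: w' then (if x == a then [:: x; b] else [:: x]) ++ mark_after a b w' else [::].

Fixpoint mark_pieces (M j : nat) (c : seq nat) (us : seq (seq nat)) : seq nat :=
  if (c, us) is (a :: c', w :: us') then mark_after a (M + j) w ++ mark_pieces M j.+1 c' us'
  else [::].

Lemma mark_after_ins B a b w : b \in B -> ins B w (mark_after a b w).
Proof.
move=> Hb; elim: w => [|x w IH] /=; first exact: ins_nil.
by case: (x == a); apply: ins_keep => //; apply: ins_add.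
Qed.

Lemma mark_pieces_ins B M j c us : (forall k, k < size c -> M + (j + k) \in B) ->
  size us = size c -> ins B (flatten us) (mark_pieces M j c us).
Proof.
elim: c j us => [|a c IH] j [|w us] //=; first by move=> *; apply: ins_nil.
move=> HB [Hs]; apply: ins_cat; first by apply: mark_after_ins; rewrite -[j]addn0 HB.
by apply: IH => // k Hk; rewrite addSnnS HB.
Qed.

Section Segments.

Variables (A : seq nat) (M : nat).
Hypothesis ltAM : forall x, x \in A -> x < M.

Let marker_notin k : M + k \notin A.
Proof. by apply/negP => /ltAM; rewrite ltnNge leq_addr. Qed.

Let re_A := re_alphabet A.

Lemma re_segment_letters a b v : a \in A -> rmatch (re_segment re_A a b) v ->
  all (fun x => (x \in A) || (x == b)) v.
Proof.
move=> Ha; apply: (@rmatch_star_ind _ (all (fun x => (x \in A) || (x == b)))) => //.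
move=> u w /rmatch_alt[/rmatch_alphabet[x Hx ->]|]; first by move=> /= ->; rewrite Hx.
by case/rmatch_cat=> [? [? [-> /rmatch_chr-> /rmatch_chr->]]] /= ->; rewrite Ha eqxx orbT.
Qed.

Lemma re_segment_count a b v : a \in A -> b \notin A -> rmatch (re_segment re_A a b) v ->
  count_mem b v <= count_mem a v.
Proof.
move=> Ha Hb; apply: (@rmatch_star_ind _ (fun v => count_mem b v <= count_mem a v)) => //.
have neq_b x : x \in A -> (x == b) = false by move=> Hx; apply: contraNF Hb => /eqP <-.
move=> u w /rmatch_alt[/rmatch_alphabet[x Hx ->]|].
  by move=> Hw /=; rewrite neq_b // add0n (leq_trans Hw) ?leq_addl.
case/rmatch_cat=> [? [? [-> /rmatch_chr-> /rmatch_chr->]]] Hw /=.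
by rewrite neq_b // eqxx eq_sym neq_b // eqxx.
Qed.

Lemma segments_split_letters j c u : all (fun a => a \in A) c -> segments_split re_A M j c u ->
  all (fun x => (x \in A) || (M + j <= x)) u.
Proof.
elim: c j u => [|a c IH] j u /=; first by move=> _ ->.
case/andP=> Ha Hc [v [w [-> Hv /(IH _ _ Hc) Hw]]]; rewrite all_cat; apply/andP; split.
  by apply: sub_all (re_segment_letters Ha Hv) => x /orP[->|/eqP->] //; rewrite leqnn orbT.
by apply: sub_all Hw => x /orP[->//|]; rewrite addnS => /ltnW ->; rewrite orbT.
Qed.

Lemma segments_split_count j c u i : all (fun a => a \in A) c -> segments_split re_A M j c u ->
  i < size c -> count_mem (M + (j + i)) u <= count_mem (nth 0 c i) u.
Proof.
elim: c j u i => [|a c IH] j u i //=.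
case/andP=> Ha Hc [v [w [-> Hv Hw]]]; rewrite !count_cat.
case: i => [|i] Hi /=.
  rewrite addn0; have /count_memPn-> : M + j \notin w.
    apply/negP => /(allP (segments_split_letters Hc Hw)).
    by rewrite (negbTE (marker_notin j)) addnS ltnn.
  by rewrite addn0 (leq_trans (re_segment_count Ha (marker_notin j) Hv)) ?leq_addr.
have /count_memPn-> : M + (j + i.+1) \notin v.
  apply/negP => /(allP (re_segment_letters Ha Hv)).
  by rewrite (negbTE (marker_notin _)) eqn_add2l -{2}[j]addn0 eqn_add2l.
by rewrite add0n addnS -addSn (leq_trans (IH _ _ _ Hc Hw Hi)) ?leq_addl.
Qed.

Lemma segments_split_blocks (S : seq nat) j c u : all (fun a => a \in A) c ->
  segments_split re_A M j c u -> (forall k, k < size c -> M + (j + k) \in S) ->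
  (forall x, x \in A -> x \notin S) ->
  in_blocks (map (addn M) (iota j (size c))) (filter (fun x => x \in S) u).
Proof.
elim: c j u => [|a c IH] j u /=; first by move=> _ ->.
case/andP=> Ha Hc [v [w [-> Hv Hw]]] HS HAS.
have HjS : M + j \in S by move: (HS 0 erefl); rewrite addn0.
exists (count_mem (M + j) v), (filter (fun x => x \in S) w); split.
  by rewrite filter_cat (filter_mem_nseq (re_segment_letters Ha Hv)).
by apply: IH => // k Hk; rewrite addSnnS; apply: HS.
Qed.

Lemma mark_after_segment a b w : all (fun x => x \in A) w -> a \in A ->
  rmatch (re_segment re_A a b) (mark_after a b w).
Proof.
move=> Hw Ha; elim: w Hw => [|x w IH] /=; first by move=> _; apply: m_star0.
case/andP=> Hx /IH Hw; apply: (m_starS _ Hw); case: eqP => [->|_].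
  by apply: m_altr; apply/rmatch_cat; exists [:: a], [:: b]; split=> //; apply/rmatch_chr.
by apply: m_altl; apply/rmatch_alphabet; exists x.
Qed.

Lemma count_mark_after a b w : all (fun x => x \in A) w -> b \notin A ->
  count_mem b (mark_after a b w) = count_mem a w.
Proof.
move=> Hw Hb; elim: w Hw => [|x w IH] //= /andP[Hx /IH IHw].
have /negbTE xb : x != b by apply: contraNneq Hb => <-.
by rewrite count_cat IHw; case: (x == a); rewrite /= xb ?eqxx.
Qed.

Lemma mark_pieces_segments j c us : size us = size c -> all (all (fun x => x \in A)) us ->
  all (fun a => a \in A) c -> segments_split re_A M j c (mark_pieces M j c us).
Proof.
elim: c j us => [|a c IH] j [|w us] //= [Hs] /andP[Hw Hus] /andP[Ha Hc].
exists (mark_after a (M + j) w), (mark_pieces M j.+1 c us).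
by split; [|apply: mark_after_segment|apply: IH].
Qed.

Lemma mark_pieces_count m j c us : all2 (fun a u => m <= count_mem a u) c us ->
  all (all (fun x => x \in A)) us ->
  all (fun b => m <= count_mem b (mark_pieces M j c us)) (map (addn M) (iota j (size c))).
Proof.
elim: c j us => [|a c IH] j [|w us] //= /andP[Hw Hcus] /andP[wA usA]; apply/andP; split.
  by rewrite count_cat count_mark_after ?marker_notin // (leq_trans Hw) ?leq_addr.
by apply: sub_all (IH j.+1 us Hcus usA) => b Hb; rewrite count_cat (leq_trans Hb) ?leq_addl.
Qed.

End Segments.

(** * The SUP instance *)

Definition covers (A c : seq nat) := all (fun a => a \in c) A.

Definition extend (A : seq nat) (L : seq (seq nat)) := rev [seq a :: c | c <- L, a <- A].

Definition tuples A k := iter k (extend A) [:: [::]].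

(* For uniq [A] these are the orderings of [A]. The reversals only match the order
   in which the coded folds below build lists. *)
Definition candidates A := rev (filter (covers A) (tuples A (size A))).

Lemma mem_tuples A k c : c \in tuples A k = (size c == k) && all (fun a => a \in A) c.
Proof.
elim: k c => [|k IH] c; first by rewrite /tuples /= inE; case: c.
rewrite /tuples iterS -/(tuples A k) mem_rev; apply/allpairsP/idP => [[[c' a] /= [Hc' Ha ->]]|].
  by move: Hc'; rewrite IH /= eqSS Ha => /andP[-> ->].
by case: c => // a c; rewrite /= eqSS => /and3P[Hs Ha Hc]; exists (c, a); rewrite IH Hs Hc.
Qed.

Lemma mem_candidates A c :
  c \in candidates A = [&& size c == size A, all (fun a => a \in A) c & covers A c].
Proof. by rewrite mem_rev mem_filter mem_tuples andbC andbA. Qed.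

Definition fresh_base (A : seq nat) := (sumn A).+1.

Definition markers (A : seq nat) := map (addn (fresh_base A)) (iota 0 (size A)).

Lemma fresh_base_gt A x : x \in A -> x < fresh_base A.
Proof.
rewrite ltnS; elim: A => //= a A IH; rewrite inE => /orP[/eqP->|/IH]; first exact: leq_addr.
by move/leq_trans; apply; rewrite leq_addl.
Qed.

Lemma fresh_notin A k : fresh_base A + k \notin A.
Proof. by apply/negP => /fresh_base_gt; rewrite ltnNge leq_addr. Qed.

Lemma mem_markers A k : (fresh_base A + k \in markers A) = (k < size A).
Proof. by rewrite mem_map ?mem_iota //; exact: addnI. Qed.

Lemma notin_markers A x : x \in A -> x \notin markers A.
Proof. by move=> xA; apply/mapP => [[k _ Ex]]; move: (fresh_notin A k); rewrite -Ex xA. Qed.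

Lemma markers_uniq A : uniq (markers A).
Proof. by rewrite map_inj_uniq ?iota_uniq //; exact: addnI. Qed.

Definition re_marking A :=
  RCat (re_segments_union (re_alphabet A) (fresh_base A) (candidates A)) (RStar (re_alphabet A)).

Lemma rmatch_re_marking A u :
  rmatch (re_marking A) u <->
  exists c u1 u2, [/\ c \in candidates A, u = u1 ++ u2,
    segments_split (re_alphabet A) (fresh_base A) 0 c u1 & all (fun x => x \in A) u2].
Proof.
rewrite rmatch_cat; split.
  case=> [u1 [u2 [-> /rmatch_segments_union [c Hc H1] /rmatch_alphabet_star H2]]].
  by exists c, u1, u2.
case=> [c [u1 [u2 [Hc -> H1 H2]]]]; exists u1, u2; split=> //.
  by apply/rmatch_segments_union; exists c.
exact/rmatch_alphabet_star.
Qed.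

Definition sup_instance (A : seq nat) (L : lang) : lang := fun w =>
  exists u, [/\ exists2 v, L v & ins (markers A) v u, rmatch (re_marking A) u
              & w = filter (fun x => x \in markers A) u].

Lemma sup_instance_in_blocks A L w : sup_instance A L w -> in_blocks (markers A) w.
Proof.
case=> u [_ /rmatch_re_marking [c [u1 [u2 [Hc -> Hu1 Hu2]]]] ->].
move: Hc; rewrite mem_candidates => /and3P[/eqP size_c cA _].
rewrite filter_cat (@eq_in_filter _ _ pred0 u2) ?filter_pred0 ?cats0; last first.
  by move=> x /(allP Hu2) /notin_markers /negbTE.
rewrite /markers -size_c; apply: (segments_split_blocks cA Hu1).
  by move=> k; rewrite add0n size_c -mem_markers.
by move=> x; rewrite size_c; apply: notin_markers.
Qed.

Lemma sup_instance_count A L w : sup_instance A L w ->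
  exists2 v, L v & forall a, a \in A -> exists2 b, b \in markers A & count_mem b w <= count_mem a v.
Proof.
case=> u [[v Lv Hins] /rmatch_re_marking [c [u1 [u2 [Hc Eu Hu1 Hu2]]]] ->]; subst u.
exists v => // a aA; move: Hc; rewrite mem_candidates => /and3P[/eqP size_c cA /allP/(_ a aA) ac].
have ic : index a c < size c by rewrite index_mem.
have bM : fresh_base A + index a c \in markers A by rewrite mem_markers -size_c.
exists (fresh_base A + index a c) => //.
rewrite count_filter_mem // count_cat (count_mem_notin Hu2 (fresh_notin A _)) addn0.
rewrite -(ins_count Hins (notin_markers aA)) count_cat; apply: leq_trans (leq_addr _ _).
by have := segments_split_count (@fresh_base_gt A) cA Hu1 ic; rewrite add0n nth_index.
Qed.

Lemma sup_instance_complete A L v m : uniq A -> L v -> all (fun x => x \in A) v ->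
  (forall a, a \in A -> size A * m <= count_mem a v) ->
  exists2 w, sup_instance A L w & forall b, b \in markers A -> m <= count_mem b w.
Proof.
move=> uA Lv vA Hv; set M := fresh_base A.
have [c [us [rest [size_c cA Ev Hcus]]]] := greedy_pieces erefl uA Hv.
have size_us : size us = size c by move: Hcus; rewrite all2E => /andP[/eqP].
move: vA; rewrite Ev all_cat all_flatten => /andP[usA restA].
have cA' : all (fun a => a \in A) c by apply/allP => x; rewrite cA.
set u := mark_pieces M 0 c us ++ rest.
exists (filter (fun x => x \in markers A) u).
  exists u; split=> //.
    exists v => //; rewrite Ev; apply: ins_cat (ins_refl _ _); apply: mark_pieces_ins size_us.
    by move=> k; rewrite add0n mem_markers size_c.
  apply/rmatch_re_marking; exists c, (mark_pieces M 0 c us), rest; split=> //.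
    by rewrite mem_candidates size_c eqxx cA' /=; apply/allP => x; rewrite cA.
  exact: mark_pieces_segments.
move=> b bM; rewrite count_filter_mem // count_cat; apply: leq_trans (leq_addr _ _).
have /allP := mark_pieces_count (@fresh_base_gt A) 0 Hcus usA.
by apply; rewrite size_c.
Qed.

Lemma eq_diag_unbounded B (L1 L2 : lang) :
  (forall w, L1 w <-> L2 w) -> diag_unbounded B L1 <-> diag_unbounded B L2.
Proof. by move=> E; split=> H m; have [w [/E Lw Hw]] := H m; exists w. Qed.

Lemma diag_unbounded_sup_instance A L :
  uniq A -> (forall w, L w -> all (fun x => x \in A) w) ->
  diag_unbounded (markers A) (sup_instance A L) <-> diag_unbounded A L.
Proof.
move=> uA LA; split=> Hdu m.
  have [w [/sup_instance_count [v Lv Hv] Hw]] := Hdu m.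
  by exists v; split=> // a /Hv [b /Hw]; apply: leq_trans.
have [v [Lv Hv]] := Hdu (size A * m).
by have [w Rw Hw] := sup_instance_complete uA Lv (LA v Lv) Hv; exists w.
Qed.

(** * Computable functions on codes *)

Lemma cpair_S0 y : cpair y.+1 0 = (cpair 0 y).+1.
Proof.
rewrite /cpair !addn0 add0n.
have -> : y.+1 * y.+2 = y * y.+1 + y.+1 * 2 by rewrite [y.+1 * _]mulnC; lia.
by rewrite divnDMl // addnS.
Qed.

Lemma cpair_SS x y : cpair x y.+1 = (cpair x.+1 y).+1.
Proof. by rewrite /cpair addnS addSn addnS. Qed.

Lemma cunpair_pair x y : cunpair (cpair x y) = (x, y).
Proof.
move: {2}(x + y) (erefl (x + y)) => s; elim: s x y => [|s IH] x y.
  by move/eqP; rewrite addn_eq0 => /andP[/eqP-> /eqP->].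
elim: y x => [|y IHy] x; first by rewrite addn0 => ->; rewrite cpair_S0 /= IH.
by move=> Hs; rewrite cpair_SS /= IHy // addSn -addnS.
Qed.

Lemma cfst_pair x y : cfst (cpair x y) = x.
Proof. by rewrite /cfst cunpair_pair. Qed.

Lemma csnd_pair x y : csnd (cpair x y) = y.
Proof. by rewrite /csnd cunpair_pair. Qed.

Definition pairE := (cfst_pair, csnd_pair).

Lemma cpair_unpair n : cpair (cfst n) (csnd n) = n.
Proof.
rewrite /cfst /csnd; elim: n => [//|n IH] /=.
by case: (cunpair n) IH => [[|x] y] /= <-; rewrite ?cpair_S0 ?cpair_SS.
Qed.

Lemma computable_ext f g : computable f -> f =1 g -> computable g.
Proof. by move=> Hf /functional_extensionality <-. Qed.

Lemma computable_id : computable id.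
Proof. exact: computable_ext (c_pair c_fst c_snd) cpair_unpair. Qed.

Lemma computable_const k : computable (fun _ => k).
Proof. by elim: k => [|k IH]; [exact: c_zero | exact: c_comp c_succ IH]. Qed.

Fixpoint prim_rec (f g : nat -> nat) a n :=
  if n is n'.+1 then g (cpair a (cpair n' (prim_rec f g a n'))) else f a.

Definition primc f g z := prim_rec f g (cfst z) (csnd z).

Lemma primcE f g a n : primc f g (cpair a n) = prim_rec f g a n.
Proof. by rewrite /primc !pairE. Qed.

Lemma computable_primc f g : computable f -> computable g -> computable (primc f g).
Proof. by move=> Hf Hg; apply: (c_rec Hf Hg) => *; rewrite !primcE. Qed.

Create HintDb computable.
#[global] Hint Resolve c_fst c_snd c_succ computable_id computable_const
  computable_primc : computable.

Ltac head_of t := lazymatch t with ?h _ => head_of h | _ => t end.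

(* Decompose along composition and pairing; the functional arguments of a
   combinator (primc, iterc, foldlc) are proved computable first, and a defined
   constant is unfolded when no hint applies. *)
Ltac computable_tac :=
  match goal with
  | |- computable (fun _ => ?c) => apply: computable_const
  | |- computable (fun x => x) => apply: computable_id
  | |- computable (fun x => cpair (@?f x) (@?g x)) =>
      apply: (@c_pair f g); computable_tac
  | |- computable (fun x => ?F (@?g x)) =>
      apply: (@c_comp F g); computable_tac
  | |- computable (?C ?F ?G) =>
      (have ? : computable F by computable_tac);
      (have ? : computable G by computable_tac);
      solve [eauto with computable]
  | |- computable (?C ?F) =>
      (have ? : computable F by computable_tac); solve [eauto with computable]
  | |- computable ?f => solve [eauto with computable]
  | |- computable ?f =>
      let h := head_of f in progress (unfold h; cbv beta); computable_tac
  end.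

Definition predc n := primc (fun _ => 0) (fun w => cfst (csnd w)) (cpair 0 n).

Lemma predcE n : predc n = n.-1.
Proof. by rewrite /predc primcE; case: n => //= n; rewrite !pairE. Qed.

Definition ifzc z :=
  primc cfst (fun w => csnd (cfst w)) (cpair (csnd z) (cfst z)).

Lemma ifzcE c x y : ifzc (cpair c (cpair x y)) = if c == 0 then x else y.
Proof. by rewrite /ifzc !pairE primcE; case: c => //= *; rewrite !pairE. Qed.

Definition iterc (F : nat -> nat) z :=
  primc csnd (fun w => F (cpair (cfst (cfst w)) (csnd (csnd w))))
    (cpair (cpair (cfst z) (csnd (csnd z))) (cfst (csnd z))).

Lemma itercE F env k x :
  iterc F (cpair env (cpair k x)) = iter k (fun y => F (cpair env y)) x.
Proof.
rewrite /iterc !pairE primcE.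
by elim: k => [|k IH] /=; rewrite !pairE ?IH.
Qed.

Lemma computable_iterc F : computable F -> computable (iterc F).
Proof. move=> HF; rewrite /iterc; computable_tac. Qed.
#[global] Hint Resolve computable_iterc : computable.

Definition addc z := iterc (fun w => (csnd w).+1) (cpair 0 (cpair (csnd z) (cfst z))).

Lemma addcE x y : addc (cpair x y) = x + y.
Proof.
rewrite /addc !pairE itercE.
by elim: y => [|y IH] /=; rewrite ?addn0 ?csnd_pair ?IH ?addnS.
Qed.

Definition subc z := iterc (fun w => predc (csnd w)) (cpair 0 (cpair (csnd z) (cfst z))).

Lemma subcE x y : subc (cpair x y) = x - y.
Proof.
rewrite /subc !pairE itercE.
by elim: y => [|y IH] /=; rewrite ?subn0 ?csnd_pair ?IH ?predcE ?subnS.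
Qed.

Definition eqnc z :=
  ifzc (cpair (addc (cpair (subc z) (subc (cpair (csnd z) (cfst z))))) (cpair 1 0)).

Lemma eqncE x y : eqnc (cpair x y) = (x == y).
Proof. by rewrite /eqnc !pairE !subcE addcE ifzcE; case: eqP; case: eqP => //; lia. Qed.

Definition orc z := ifzc (cpair (cfst z) (cpair (csnd z) 1)).
Definition andc z := ifzc (cpair (cfst z) (cpair 0 (csnd z))).

Lemma orcE (b c : bool) : orc (cpair b c) = b || c.
Proof. by rewrite /orc !pairE ifzcE; case: b. Qed.

Lemma andcE (b c : bool) : andc (cpair b c) = b && c.
Proof. by rewrite /andc !pairE ifzcE; case: b. Qed.

Lemma size_le_code s : size s <= code_seq s.
Proof. by elim: s => //= x s IH; rewrite ltnS (leq_trans IH) // leq_addl. Qed.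

(* The state of a coded left fold is [cpair env (cpair list acc)]. *)
Definition foldl_step (F : nat -> nat) s :=
  let: l := cfst (csnd s) in
  ifzc (cpair l (cpair s (cpair (cfst s) (cpair (csnd (predc l))
     (F (cpair (cfst s) (cpair (cfst (predc l)) (csnd (csnd s))))))))).

(* The code of a list bounds its length, so that many steps finish the fold. *)
Definition foldlc (F : nat -> nat) z :=
  csnd (csnd (iterc (fun w => foldl_step F (csnd w)) (cpair 0 (cpair (cfst (csnd z)) z)))).

Lemma computable_foldlc F : computable F -> computable (foldlc F).
Proof. move=> HF; rewrite /foldlc; computable_tac. Qed.
#[global] Hint Resolve computable_foldlc : computable.

Lemma foldlcE F env s acc :
  foldlc F (cpair env (cpair (code_seq s) acc)) =
  foldl (fun acc e => F (cpair env (cpair e acc))) acc s.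
Proof.
rewrite /foldlc !pairE itercE.
have step_nil a : foldl_step F (cpair env (cpair 0 a)) = cpair env (cpair 0 a).
  by rewrite /foldl_step !pairE ifzcE.
have step_cons e s' a : foldl_step F (cpair env (cpair (code_seq (e :: s')) a)) =
   cpair env (cpair (code_seq s') (F (cpair env (cpair e a)))).
  by rewrite /foldl_step !pairE ifzcE /= predcE /= !pairE.
suff iter_steps : forall k s acc, size s <= k ->
   iter k (fun y => foldl_step F (csnd (cpair 0 y))) (cpair env (cpair (code_seq s) acc)) =
   cpair env (cpair 0 (foldl (fun acc e => F (cpair env (cpair e acc))) acc s)).
  by rewrite iter_steps ?size_le_code // !pairE.
elim=> [|k IH] [|e s'] a // Hs; rewrite iterSr csnd_pair ?step_nil ?step_cons.
  exact: (IH [::]).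
exact: IH.
Qed.

Lemma foldlc_map T U (encT : T -> nat) (encU : U -> nat) F f env t s :
  (forall t u, F (cpair env (cpair (encU u) (encT t))) = encT (f t u)) ->
  foldlc F (cpair env (cpair (code_seq (map encU s)) (encT t))) = encT (foldl f t s).
Proof. by move=> HF; rewrite foldlcE; elim: s t => //= u s IH t; rewrite HF IH. Qed.

Lemma foldlc_nat T (encT : T -> nat) F f env t s :
  (forall t u, F (cpair env (cpair u (encT t))) = encT (f t u)) ->
  foldlc F (cpair env (cpair (code_seq s) (encT t))) = encT (foldl f t s).
Proof. by rewrite -{1}(map_id s); apply: foldlc_map. Qed.

Notation code_seqs L := (code_seq (map code_seq L)).
Notation fold_env w := (cfst w) (only parsing).
Notation fold_elem w := (cfst (csnd w)) (only parsing).
Notation fold_acc w := (csnd (csnd w)) (only parsing).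

Lemma foldl_cons T U (g : U -> T) acc s :
  foldl (fun acc x => g x :: acc) acc s = catrev (map g s) acc.
Proof. by elim: s acc => //= x s IH acc; rewrite IH. Qed.

Lemma foldl_filter_cons T (p : pred T) acc s :
  foldl (fun acc x => if p x then x :: acc else acc) acc s = catrev (filter p s) acc.
Proof. by elim: s acc => //= x s IH acc; rewrite IH; case: (p x). Qed.

Lemma foldl_catrev T U (g : U -> seq T) acc s :
  foldl (fun acc x => catrev (g x) acc) acc s = catrev (flatten (map g s)) acc.
Proof. by elim: s acc => //= x s IH acc; rewrite IH catrev_catl. Qed.

Lemma foldl_orb T (p : pred T) b s : foldl (fun b x => b || p x) b s = b || has p s.
Proof. by elim: s b => [|x s IH] b /=; rewrite ?orbF // IH orbA. Qed.

Lemma foldl_andb T (p : pred T) b s : foldl (fun b x => b && p x) b s = b && all p s.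
Proof. by elim: s b => [|x s IH] b /=; rewrite ?andbT // IH andbA. Qed.

Lemma foldl_const T U (f : T -> T) t (s : seq U) :
  foldl (fun t _ => f t) t s = iter (size s) f t.
Proof. by elim: s t => //= _ s IH t; rewrite IH -iterSr. Qed.

Definition sumnc l :=
  foldlc (fun w => addc (cpair (fold_elem w) (fold_acc w))) (cpair 0 (cpair l 0)).

Lemma sumncE s : sumnc (code_seq s) = sumn s.
Proof.
rewrite /sumnc (foldlc_nat (encT := id) (f := fun t u => u + t)) => [|t u]; last first.
  by rewrite !pairE addcE.
rewrite -[RHS]add0n; elim: s 0 => [|a s IH] t /=; first by rewrite addn0.
by rewrite IH addnCA addnA.
Qed.

Definition revc l :=
  foldlc (fun w => (cpair (fold_elem w) (fold_acc w)).+1) (cpair 0 (cpair l 0)).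

Lemma revcE s : revc (code_seq s) = code_seq (rev s).
Proof.
rewrite /revc (foldlc_nat (encT := code_seq) (f := fun t u => u :: t) [::]).
  by rewrite foldl_cons map_id.
by move=> t u; rewrite !pairE.
Qed.

Definition memc z :=
  foldlc (fun w => orc (cpair (fold_acc w) (eqnc (cpair (fold_env w) (fold_elem w)))))
    (cpair (cfst z) (cpair (csnd z) 0)).

Lemma memcE a s : memc (cpair a (code_seq s)) = (a \in s).
Proof.
rewrite /memc !pairE (foldlc_nat (encT := nat_of_bool) (f := fun b x => b || (x == a)) false).
  by rewrite foldl_orb -has_pred1.
by move=> b x; rewrite !pairE eqncE orcE eq_sym.
Qed.

Definition coversc z :=
  foldlc (fun w => andc (cpair (fold_acc w) (memc (cpair (fold_elem w) (fold_env w)))))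
    (cpair (csnd z) (cpair (cfst z) 1)).

Lemma coverscE A c : coversc (cpair (code_seq A) (code_seq c)) = covers A c.
Proof.
rewrite /coversc !pairE (foldlc_nat (encT := nat_of_bool) (f := fun b a => b && (a \in c)) true).
  by rewrite foldl_andb.
by move=> b x; rewrite !pairE memcE andcE.
Qed.

Definition extendc z :=
  foldlc (fun w => foldlc (fun v => (cpair (cpair (fold_elem v) (fold_env v)).+1 (fold_acc v)).+1)
                     (cpair (fold_elem w) (cpair (fold_env w) (fold_acc w))))
    (cpair (cfst z) (cpair (csnd z) 0)).

Lemma extendcE A L : extendc (cpair (code_seq A) (code_seqs L)) = code_seqs (extend A L).
Proof.
rewrite /extendc !pairE (foldlc_map (encT := fun L => code_seqs L)
  (f := fun acc c => catrev [seq a :: c | a <- A] acc) [::]).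
  by rewrite foldl_catrev.
move=> acc c; rewrite !pairE (foldlc_nat (encT := fun L => code_seqs L)
  (f := fun acc a => (a :: c) :: acc)).
  by rewrite foldl_cons.
by move=> acc' a; rewrite !pairE.
Qed.

Definition tuplesc cA :=
  foldlc (fun w => extendc (cpair (fold_env w) (fold_acc w)))
    (cpair cA (cpair cA (code_seqs [:: [::]]))).

Lemma tuplescE A : tuplesc (code_seq A) = code_seqs (tuples A (size A)).
Proof.
rewrite /tuplesc (foldlc_nat (encT := fun L => code_seqs L) (f := fun L _ => extend A L)).
  by rewrite foldl_const.
by move=> L a; rewrite !pairE extendcE.
Qed.

Definition candidatesc cA :=
  foldlc (fun w => ifzc (cpair (coversc (cpair (fold_env w) (fold_elem w)))
                             (cpair (fold_acc w) (cpair (fold_elem w) (fold_acc w)).+1)))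
    (cpair cA (cpair (tuplesc cA) 0)).

Lemma candidatescE A : candidatesc (code_seq A) = code_seqs (candidates A).
Proof.
rewrite /candidatesc tuplescE (foldlc_map (encT := fun L => code_seqs L)
  (f := fun acc c => if covers A c then c :: acc else acc) [::]).
  by rewrite foldl_filter_cons.
by move=> acc c; rewrite !pairE coverscE ifzcE; case: (covers A c).
Qed.

Definition markersc cA :=
  let step w := cpair (cfst (fold_acc w)).+1
    (cpair (addc (cpair (fold_env w) (cfst (fold_acc w)))) (csnd (fold_acc w))).+1 in
  revc (csnd (foldlc step (cpair (sumnc cA).+1 (cpair cA (cpair 0 0))))).

Lemma markerscE A : markersc (code_seq A) = code_seq (markers A).
Proof.
set M := fresh_base A.
rewrite /markersc sumncE (foldlc_nat (encT := fun p => cpair p.1 (code_seq p.2))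
  (f := fun p _ => (p.1.+1, M + p.1 :: p.2)) (0, [::])); last first.
  by move=> p a; rewrite !pairE addcE.
suff -> : forall (s : seq nat) k l, foldl (fun p _ => (p.1.+1, M + p.1 :: p.2)) (k, l) s =
    (k + size s, catrev [seq M + i | i <- iota k (size s)] l).
  by rewrite csnd_pair revcE -/(rev _) revK.
by elim=> [|a s IH] k l /=; rewrite ?addn0 // IH addSnnS.
Qed.

(* In [code_regex], the tags 2, 3, 4 and 5 stand for RChr, RCat, RAlt and RStar. *)
Definition re_alphabetc cA :=
  foldlc (fun w => cpair 4 (cpair (fold_acc w) (cpair 2 (fold_elem w))))
    (cpair 0 (cpair cA (code_regex RNone))).

Lemma re_alphabetcE A : re_alphabetc (code_seq A) = code_regex (re_alphabet A).
Proof.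
rewrite /re_alphabetc (foldlc_nat (encT := code_regex) (f := fun r a => RAlt r (RChr a)) RNone) //.
by move=> r a; rewrite !pairE.
Qed.

Definition re_segmentc z :=
  cpair 5 (cpair 4 (cpair (cfst z)
    (cpair 3 (cpair (cpair 2 (cfst (csnd z))) (cpair 2 (csnd (csnd z))))))).

Lemma re_segmentcE r a b :
  re_segmentc (cpair (code_regex r) (cpair a b)) = code_regex (re_segment r a b).
Proof. by rewrite /re_segmentc !pairE. Qed.

Definition re_segmentsc z :=
  let step w := cpair (cfst (fold_acc w)).+1
    (cpair 3 (cpair (csnd (fold_acc w)) (re_segmentc (cpair (cfst (fold_env w))
      (cpair (fold_elem w) (addc (cpair (csnd (fold_env w)) (cfst (fold_acc w))))))))) in
  csnd (foldlc step (cpair (cfst z) (cpair (csnd z) (cpair 0 (code_regex REps))))).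

Lemma re_segmentscE r M c :
  re_segmentsc (cpair (cpair (code_regex r) M) (code_seq c)) = code_regex (re_segments r M c).
Proof.
rewrite /re_segmentsc !pairE (foldlc_nat (encT := fun p => cpair p.1 (code_regex p.2))
  (f := fun p a => (p.1.+1, RCat p.2 (re_segment r a (M + p.1)))) (0, REps)).
  by rewrite csnd_pair.
by move=> p a; rewrite !pairE addcE re_segmentcE.
Qed.

Definition re_segments_unionc z :=
  foldlc (fun w => cpair 4 (cpair (fold_acc w) (re_segmentsc (cpair (fold_env w) (fold_elem w)))))
    (cpair (cfst z) (cpair (csnd z) (code_regex RNone))).

Lemma re_segments_unioncE r M cs :
  re_segments_unionc (cpair (cpair (code_regex r) M) (code_seqs cs)) =
  code_regex (re_segments_union r M cs).
Proof.
rewrite /re_segments_unionc !pairE (foldlc_map (encT := code_regex)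
  (f := fun acc c => RAlt acc (re_segments r M c)) RNone) // => r' c.
by rewrite !pairE re_segmentscE.
Qed.

Definition re_markingc cA :=
  cpair 3 (cpair
    (re_segments_unionc (cpair (cpair (re_alphabetc cA) (sumnc cA).+1) (candidatesc cA)))
    (cpair 5 (re_alphabetc cA))).

Lemma re_markingcE A : re_markingc (code_seq A) = code_regex (re_marking A).
Proof. by rewrite /re_markingc re_alphabetcE sumncE candidatescE re_segments_unioncE. Qed.

Lemma full_trio_sup_instance sem : full_trio sem ->
  exists h, computable h /\
    forall A d w, sem (h (cpair (code_seq A) d)) w <-> sup_instance A (sem d) w.
Proof.
case=> _ [[P [cP HP]] [[U [cU HU]] [I [cI HI]]]].
exists (fun x => P (cpair (markersc (cfst x))
  (I (cpair (U (cpair (markersc (cfst x)) (csnd x))) (re_markingc (cfst x)))))).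
split; first by computable_tac.
move=> A d w; rewrite !pairE markerscE re_markingcE HP; split.
  by case=> u [/HI [/HU [v [Hv Hins]] Hr] ->]; exists u; split=> //; exists v.
case=> u [[v Hv Hins] Hr ->]; exists u; split=> //.
by apply/HI; split=> //; apply/HU; exists v.
Qed.

Theorem lemma4p2 (sem : nat -> lang) :
  full_trio sem -> SUP_decidable sem -> diagonal_decidable sem.
Proof.
move=> /full_trio_sup_instance [h [ch Hh]] [g [cg Hg]].
exists (fun x => g (cpair (markersc (cfst x)) (h x))); split; first by computable_tac.
move=> A d uA LA; rewrite cfst_pair markerscE Hg ?markers_uniq //; last first.
  by move=> w /Hh /sup_instance_in_blocks.
apply: iff_trans (diag_unbounded_sup_instance uA LA); exact: eq_diag_unbounded.
Qed.
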